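(* Let $X$ be a connected $k$-regular graph and $U$ the transition matrix of the Grover walk on $X$. Let $\lambda$ be an eigenvalue of $A(X)$ with $\lambda\neq\pm k$, let $E_\lambda$ be the orthogonal projection onto the $\lambda$-eigenspace of $A(X)$, and write $\lambda=k\cos\theta$ with $\theta\in(0,\pi)$. Then $e^{i\theta}$ and $e^{-i\theta}$ are eigenvalues of $U$, and if $F_{\theta_+}$ and $F_{\theta_-}$ denote the orthogonal projections onto the $e^{i\theta}$- and $e^{-i\theta}$-eigenspaces of $U$ respectively, then $F_{\theta_+}-F_{\theta_-}$ is a purely imaginary scalar multiple of \[D_t^TE_\lambda D_h - D_h^TE_\lambda D_t.\]
   Context: Each edge $\{a,b\}$ of $X$ is replaced by arcs $(a,b)$ and $(b,a)$. The line digraph $\mathrm{LD}(X)$ has the arcs as vertices, with an arc from $(a,b)$ to $(c,d)$ iff $b=c$; $A(\mathrm{LD}(X))$ is its $01$-adjacency matrix. $R$ is the permutation matrix on arcs mapping $(a,b)$ to $(b,a)$. The transition matrix of the Grover walk is $U=\frac{2}{k}A(\mathrm{LD}(X))-R$ (a real orthogonal matrix). $D_t$ and $D_h$ have rows indexed by vertices and columns by arcs: $(D_t)_{u,(a,b)}=1$ iff $u=a$, $(D_h)_{u,(a,b)}=1$ iff $u=b$, and $0$ otherwise. *)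

From HB Require Import structures.
From mathcomp Require Import all_boot all_algebra.
From mathcomp Require Import reals trigo.
From mathcomp Require Export complex.
Set Implicit Arguments. Unset Strict Implicit. Unset Printing Implicit Defensive.
Import GRing.Theory Num.Theory.
Local Open Scope ring_scope.
Local Open Scope complex_scope.

Section Graph.
Variables (V : finType) (e : rel V).

Definition simple_graph := symmetric e /\ irreflexive e.
Definition regular (k : nat) := forall v : V, #|[set w | e v w]| = k.
Definition connected_graph := forall x y : V, connect e x y.

Definition garc := {p : V * V | e p.1 p.2}.
Definition tl (x : garc) : V := (val x).1.
Definition hd (x : garc) : V := (val x).2.

Variable R : realType.
Notation C := (R[i]).

(* vertices indexed by 'I_#|V|, arcs by 'I_#|garc| via enum_val *)
Definition adjmx : 'M[C]_#|V| :=
  \matrix_(i, j) (e (enum_val i) (enum_val j))%:R.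
Definition LDadj : 'M[C]_#|{: garc}| :=
  \matrix_(i, j) (hd (enum_val i) == tl (enum_val j))%:R.
Definition revmx : 'M[C]_#|{: garc}| :=
  \matrix_(i, j) ((tl (enum_val i) == hd (enum_val j)) &&
                  (hd (enum_val i) == tl (enum_val j)))%:R.
Definition grover (k : nat) : 'M[C]_#|{: garc}| :=
  (2%:R / k%:R) *: LDadj - revmx.
Definition Dt : 'M[C]_(#|V|, #|{: garc}|) :=
  \matrix_(u, x) (enum_val u == tl (enum_val x))%:R.
Definition Dh : 'M[C]_(#|V|, #|{: garc}|) :=
  \matrix_(u, x) (enum_val u == hd (enum_val x))%:R.
End Graph.

Definition adjoint (R : realType) n (P : 'M[R[i]]_n) : 'M[R[i]]_n :=
  (map_mx conjc P)^T.

Definition orth_proj_eigenspace (R : realType) n (M P : 'M[R[i]]_n) (mu : R[i]) :=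
  [/\ P *m P = P, adjoint P = P &
      forall v : 'cV[R[i]]_n, P *m v = v <-> M *m v = mu *: v].

From HB Require Import structures.
From mathcomp Require Import all_boot all_algebra.
From mathcomp Require Import reals trigo.
From mathcomp Require Import complex.
From mathcomp Require Import ring lra.
Import GRing.Theory Num.Theory.
Local Open Scope ring_scope.
Local Open Scope complex_scope.
Set Implicit Arguments. Unset Strict Implicit.

(* Write T = D_t, H = D_h and R for the arc reversal.  For a k-regular graph
   the incidence matrices satisfy  T T^T = H H^T = k I,  T H^T = H T^T = A,
   R T^T = H^T,  R H^T = T^T,  R^2 = I  and  A(LD(X)) = H^T T, so
   U = (2/k) H^T T - R, whence  H U = T  and  U T^T = H^T.
   Fix nu != 0 with nu^2 != 1 and lambda = (k/2)(nu + 1/nu), and put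
   X = H^T - nu^-1 T^T,  Y = H - nu T,  d = 2k - (nu + 1/nu) lambda != 0.
   (1) If v A = lambda v then v Y is a nu-eigenvector of U (nonzero since
       Y X = 2k I - (nu + 1/nu) A), so nu is an eigenvalue of U.
   (2) If moreover lambda is real, |nu| = 1 and E is the orthogonal projection
       onto the lambda-eigenspace of A, then d^-1 X E Y is an orthogonal
       projection whose fixed vectors are exactly the nu-eigenvectors of U;
       by uniqueness of orthogonal projections it is the projection F_nu.
   Subtracting the formulas for nu and 1/nu gives
   F_nu - F_{1/nu} = 2/(k (1/nu - nu)) (T^T E H - H^T E T); with nu = e^{i theta}
   the scalar is i/(k sin theta), which is the corollary. *)

Lemma enum_val_eqE (T : finType) (u : 'I_#|T|) (v : T) :
  (enum_val u == v) = (u == enum_rank v).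
Proof. by apply/eqP/eqP => [<-|->]; [rewrite enum_valK | rewrite enum_rankK]. Qed.

Lemma sum_delta (M : nmodType) (I : finType) (r : I) (F : I -> M) :
  \sum_y (F y *+ (y == r)) = F r.
Proof.
rewrite (bigD1 r) //= eqxx mulr1n big1 ?addr0 // => y /negbTE ->.
by rewrite mulr0n.
Qed.

Section ConjugateTranspose.
Variable R : realType.
Local Notation C := R[i].

Definition hadj m n (M : 'M[C]_(m, n)) : 'M[C]_(n, m) := (map_mx conjc M)^T.

Lemma hadjM m n p (M : 'M[C]_(m, n)) (N : 'M[C]_(n, p)) :
  hadj (M *m N) = hadj N *m hadj M.
Proof. by rewrite /hadj map_mxM trmx_mul. Qed.

Lemma hadjB m n (M N : 'M[C]_(m, n)) : hadj (M - N) = hadj M - hadj N.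
Proof. by rewrite /hadj map_mxB linearB. Qed.

Lemma hadjZ m n (s : C) (M : 'M[C]_(m, n)) : hadj (s *: M) = conjc s *: hadj M.
Proof. by rewrite /hadj map_mxZ linearZ. Qed.

Lemma hadj_tr m n (M : 'M[C]_(m, n)) : hadj M^T = (hadj M)^T.
Proof. by rewrite /hadj -map_trmx. Qed.

Lemma hadj_nat m n (f : 'I_m -> 'I_n -> nat) :
  hadj (\matrix_(i, j) ((f i j)%:R : C)) = (\matrix_(i, j) ((f i j)%:R : C))^T.
Proof. by apply/matrixP => i j; rewrite !mxE conjc_nat. Qed.

Lemma mulmx_colwise m n p (M : 'M[C]_(m, n)) (N : 'M[C]_(n, p)) (P : 'M[C]_(m, p)) :
  (forall j, M *m col j N = col j P) -> M *m N = P.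
Proof.
move=> h; apply/matrixP => i j; have /matrixP/(_ i 0) := h j.
by rewrite colE mulmxA -colE !mxE.
Qed.

Lemma orth_proj_unique n (P Q : 'M[C]_n) :
  P *m P = P -> Q *m Q = Q -> hadj P = P -> hadj Q = Q ->
  (forall v : 'cV_n, P *m v = v <-> Q *m v = v) -> P = Q.
Proof.
move=> PP QQ aP aQ fixPQ.
have QP : Q *m P = P by apply: mulmx_colwise => j; apply/fixPQ; rewrite colE mulmxA PP.
have PQ : P *m Q = Q by apply: mulmx_colwise => j; apply/fixPQ; rewrite colE mulmxA QQ.
by rewrite -aP -QP hadjM aP aQ PQ.
Qed.

End ConjugateTranspose.

Lemma sandwich_sub (R : realType) (p q : nat) (a b : R[i])
  (Ht Tt : 'M[R[i]]_(p, q)) (E : 'M[R[i]]_q) (H T : 'M[R[i]]_(q, p)) :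
  (Ht - b *: Tt) *m E *m (H - a *: T) - (Ht - a *: Tt) *m E *m (H - b *: T) =
  (a - b) *: (Tt *m E *m H - Ht *m E *m T).
Proof.
rewrite !mulmxBl !mulmxBr -!scalemxAl -!scalemxAr !scalerA.
move: (Ht *m E *m H) (Ht *m E *m T) (Tt *m E *m H) (Tt *m E *m T) => m1 m2 m3 m4.
by apply/matrixP => i j; rewrite !mxE; ring.
Qed.

Section IncidenceIdentities.
Variables (V : finType) (e : rel V) (R : realType) (k : nat).
Hypotheses (hsym : symmetric e) (hreg : regular e k).
Local Notation C := R[i].
Local Notation A := (adjmx e R).
Local Notation T := (Dt e R).
Local Notation H := (Dh e R).
Local Notation Rv := (revmx e R).

Lemma sum_arcs (F : V -> V -> C) :
  \sum_(x < #|{: garc e}|) F (tl (enum_val x)) (hd (enum_val x)) =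
  \sum_a \sum_b F a b *+ e a b.
Proof.
rewrite -(big_enum_val (fun x : garc e => F (tl x) (hd x))) /= pair_big /=.
rewrite [RHS](eq_bigr (fun p : V * V => if e p.1 p.2 then F p.1 p.2 else 0));
  last by move=> p _; rewrite mulrb.
rewrite -big_mkcond /= (reindex_omap (val : garc e -> V * V) insub);
  last by move=> p ep; rewrite insubT.
by apply: eq_bigl => -[p ep] /=; rewrite insubT ep /= inE eqxx.
Qed.

Lemma sum_arcs_from (v : V) (G : V -> V -> C) :
  \sum_a \sum_b (G a b *+ (v == a)) *+ e a b = \sum_b G v b *+ e v b.
Proof.
rewrite (bigD1 v) //= [X in _ + X]big1 ?addr0.
  by apply: eq_bigr => b _; rewrite eqxx mulr1n.
move=> a av; rewrite eq_sym (negbTE av).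
by apply: big1 => b _; rewrite mulr0n mul0rn.
Qed.

Lemma sum_degree v : \sum_b (1 : C) *+ e v b = k%:R.
Proof.
rewrite -(hreg v) -sum1_card natr_sum [RHS]big_mkcond /=.
by apply: eq_bigr => b _; rewrite inE; case: (e v b).
Qed.

Lemma Dt_Dt_tr : T *m T^T = (k%:R : C)%:M.
Proof.
apply/matrixP => u w; rewrite !mxE.
under eq_bigr do rewrite !mxE.
rewrite (sum_arcs (fun a b => (enum_val u == a)%:R * (enum_val w == a)%:R)).
under eq_bigr do under eq_bigr do rewrite mulr_natl.
rewrite sum_arcs_from.
have [->|nuw] := eqVneq u w; first by rewrite eqxx sum_degree.
rewrite (inj_eq enum_val_inj) eq_sym (negbTE nuw) mulr0n.
by apply: big1 => b _; rewrite mul0rn.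
Qed.

Lemma Dt_Dh_tr : T *m H^T = A.
Proof.
apply/matrixP => u w; rewrite !mxE.
under eq_bigr do rewrite !mxE.
rewrite (sum_arcs (fun a b => (enum_val u == a)%:R * (enum_val w == b)%:R)).
under eq_bigr do under eq_bigr do rewrite mulr_natl.
rewrite sum_arcs_from.
under eq_bigr => b _ do rewrite mulrnAC eq_sym.
by rewrite (sum_delta (enum_val w) (fun b => (e (enum_val u) b)%:R)).
Qed.

Lemma adjmx_tr : A^T = A.
Proof. by apply/matrixP => u w; rewrite !mxE hsym. Qed.

Lemma Dh_Dt_tr : H *m T^T = A.
Proof. by rewrite -[H]trmxK -trmx_mul Dt_Dh_tr adjmx_tr. Qed.

Lemma arc_rev_subproof (x : garc e) : e (val x).2 (val x).1.
Proof. by rewrite hsym (valP x). Qed.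

Definition arc_rev (x : garc e) : garc e :=
  exist (fun p : V * V => e p.1 p.2) ((val x).2, (val x).1) (arc_rev_subproof x).

Lemma arc_revK : involutive arc_rev.
Proof. by move=> [[a b] p]; apply: val_inj. Qed.

Lemma revmxE x y : Rv x y = (y == enum_rank (arc_rev (enum_val x)))%:R.
Proof.
rewrite mxE -enum_val_eqE; congr (_%:R).
case: (enum_val x) => [[a b] pab]; case: (enum_val y) => [[c d] pcd].
by rewrite /tl /hd /= -val_eqE /= xpair_eqE (eq_sym a) (eq_sym b) andbC.
Qed.

Lemma revmx_mul p (M : 'M[C]_(#|{: garc e}|, p)) :
  Rv *m M = \matrix_(x, j) M (enum_rank (arc_rev (enum_val x))) j.
Proof.
apply/matrixP => x j; rewrite !mxE.
under eq_bigr do rewrite revmxE mulr_natl.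
by rewrite (sum_delta _ (fun y => M y j)).
Qed.

Lemma revmx_Dh_tr : Rv *m H^T = T^T.
Proof. by rewrite revmx_mul; apply/matrixP => x u; rewrite !mxE enum_rankK. Qed.

Lemma revmx_Dt_tr : Rv *m T^T = H^T.
Proof. by rewrite revmx_mul; apply/matrixP => x u; rewrite !mxE enum_rankK. Qed.

Lemma revmx_invol : Rv *m Rv = 1%:M.
Proof.
rewrite revmx_mul; apply/matrixP => x z.
by rewrite mxE revmxE enum_rankK arc_revK enum_valK [RHS]mxE eq_sym.
Qed.

Lemma revmx_tr : Rv^T = Rv.
Proof.
apply/matrixP => x y; rewrite mxE !revmxE -!enum_val_eqE.
by congr (_%:R); congr (nat_of_bool _); apply/eqP/eqP => ->; rewrite arc_revK.
Qed.

Lemma Dt_revmx : T *m Rv = H.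
Proof. by rewrite -[T]trmxK -revmx_tr -trmx_mul revmx_Dt_tr trmxK. Qed.

Lemma Dh_revmx : H *m Rv = T.
Proof. by rewrite -[H]trmxK -revmx_tr -trmx_mul revmx_Dh_tr trmxK. Qed.

Lemma Dh_Dh_tr : H *m H^T = (k%:R : C)%:M.
Proof.
by rewrite -Dt_revmx trmx_mul revmx_tr mulmxA -(mulmxA T) revmx_invol mulmx1 Dt_Dt_tr.
Qed.

Lemma LDadjE : LDadj e R = H^T *m T.
Proof.
apply/matrixP => x z; rewrite !mxE.
under eq_bigr do rewrite !mxE mulr_natl !enum_val_eqE.
rewrite (sum_delta _ (fun u => ((u == enum_rank (tl (enum_val z)))%:R : C))).
by rewrite (inj_eq enum_rank_inj).
Qed.

Lemma hadj_Dh : hadj H = H^T.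
Proof. by rewrite /Dh (@hadj_nat R _ _ (fun u x => nat_of_bool _)). Qed.

Lemma hadj_Dt : hadj T = T^T.
Proof. by rewrite /Dt (@hadj_nat R _ _ (fun u x => nat_of_bool _)). Qed.

Lemma hadj_adjmx : hadj A = A.
Proof. by rewrite /adjmx (@hadj_nat R _ _ (fun u x => nat_of_bool _)) adjmx_tr. Qed.

End IncidenceIdentities.

Section GroverSpectrum.
Variables (V : finType) (e : rel V) (R : realType) (k : nat).
Hypotheses (hsym : symmetric e) (hreg : regular e k).
Local Notation C := R[i].
Local Notation A := (adjmx e R).
Local Notation T := (Dt e R).
Local Notation H := (Dh e R).
Local Notation Rv := (revmx e R).
Local Notation U := (grover e R k).
Local Notation c := (2%:R / (k%:R : C)).

Lemma groverE : U = c *: (H^T *m T) - Rv.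
Proof. by rewrite /grover LDadjE. Qed.

Section Eigenvalue.
(* nu is a root of  k nu^2 - 2 lamC nu + k = 0  different from +-1. *)
Variables (lamC nu : C).
Hypotheses (hk : (k%:R : C) != 0) (hnu : nu != 0) (hnu2 : nu * nu != 1)
  (hlam : lamC = k%:R / 2%:R * (nu + nu^-1)).

Local Notation X := (H^T - nu^-1 *: T^T).
Local Notation Y := (H - nu *: T).
Local Notation d := (2%:R * k%:R - (nu + nu^-1) * lamC).

Lemma c_mul_k : c * k%:R = 2%:R.
Proof. by rewrite mulfVK. Qed.

Lemma Dh_grover : H *m U = T.
Proof.
rewrite groverE mulmxBr -scalemxAr mulmxA (Dh_Dh_tr R hsym hreg) mul_scalar_mx scalerA c_mul_k.
by rewrite (Dh_revmx R hsym) scaler_nat mulr2n addrK.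
Qed.

Lemma grover_Dt_tr : U *m T^T = H^T.
Proof.
rewrite groverE mulmxBl -scalemxAl -mulmxA (Dt_Dt_tr R hreg) mul_mx_scalar scalerA c_mul_k.
by rewrite (revmx_Dt_tr R hsym) scaler_nat mulr2n addrK.
Qed.

Lemma Dt_grover : T *m U = c *: (A *m T) - H.
Proof. by rewrite groverE mulmxBr -scalemxAr mulmxA Dt_Dh_tr (Dt_revmx R hsym). Qed.

Lemma grover_Dh_tr : U *m H^T = c *: (H^T *m A) - T^T.
Proof. by rewrite groverE mulmxBl -scalemxAl -mulmxA Dt_Dh_tr (revmx_Dh_tr R hsym). Qed.

Lemma sub_inv_neq0 : nu - nu^-1 != 0.
Proof. by apply: contra hnu2; rewrite subr_eq0 => /eqP {1}->; rewrite mulVf. Qed.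

Lemma dE : d = - (k%:R / 2%:R) * (nu - nu^-1) ^+ 2.
Proof. by rewrite hlam; field. Qed.

Lemma d_neq0 : d != 0.
Proof.
rewrite dE mulf_neq0 ?expf_neq0 ?sub_inv_neq0 //.
by rewrite oppr_eq0 mulf_neq0 // invr_neq0 // pnatr_eq0.
Qed.

Lemma Y_mul_X : Y *m X = (2%:R * k%:R : C)%:M - (nu + nu^-1) *: A.
Proof.
rewrite !mulmxBr !mulmxBl -!scalemxAl -!scalemxAr (Dh_Dh_tr R hsym hreg) (Dh_Dt_tr R hsym).
rewrite Dt_Dh_tr (Dt_Dt_tr R hreg) scalerA.
by apply/matrixP => i j; rewrite !mxE; field.
Qed.

(* (1) A (row) lamC-eigenvector v of A yields the nu-eigenvector v Y of U. *)
Lemma grover_eigenvalue : eigenvalue A lamC -> eigenvalue U nu.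
Proof.
case/eigenvalueP => v hv v0; apply/eigenvalueP; exists (v *m Y).
  rewrite -mulmxA mulmxBl -scalemxAl Dh_grover Dt_grover.
  move: T H => T0 H0.
  rewrite !mulmxBr -!scalemxAr (mulmxBr v) -scalemxAr mulmxA hv -scalemxAl.
  move: (v *m T0) (v *m H0) => a b.
  by apply/matrixP => i j; rewrite !mxE hlam; field; rewrite ?hnu ?hk.
apply: contraNneq v0 => vY0.
have : v *m Y *m X = d *: v.
  rewrite -mulmxA Y_mul_X mulmxBr -scalemxAr hv mul_mx_scalar scalerA -scalerBl.
  by congr (_ *: _); ring.
rewrite vY0 mul0mx => /esym/eqP; rewrite scaler_eq0 => /orP[|/eqP //].
by rewrite (negbTE d_neq0).
Qed.

(* Conversely, a nu-eigenvector w of U is determined by b = H w, which is a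
   lamC-eigenvector of A:  w is a multiple of X b. *)
Lemma grover_eigvec_head (w : 'cV[C]_#|{: garc e}|) :
  U *m w = nu *: w -> A *m (H *m w) = lamC *: (H *m w).
Proof.
move=> hw.
have hTw : T *m w = nu *: (H *m w) by rewrite -Dh_grover -mulmxA hw -scalemxAr.
have : nu *: (T *m w) = c *: (A *m (T *m w)) - H *m w.
  by rewrite scalemxAr -hw (mulmxA T) Dt_grover mulmxBl -scalemxAl -mulmxA.
rewrite hTw -scalemxAr; move: (H *m w) (A *m (H *m w)) => b z /matrixP hb.
apply/matrixP => i j; move/(_ i j): hb; rewrite !mxE => hb.
have -> : z i j = (c * (nu * z i j) - b i j + b i j) / (c * nu) by field; rewrite ?hnu ?hk.
by rewrite -hb hlam; field; rewrite ?hnu ?hk.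
Qed.

Lemma grover_eigvec_rebuild (w : 'cV[C]_#|{: garc e}|) :
  U *m w = nu *: w -> w = (- c * nu * nu / (1 - nu * nu)) *: (X *m (H *m w)).
Proof.
move=> hw.
have hTw : T *m w = nu *: (H *m w) by rewrite -Dh_grover -mulmxA hw -scalemxAr.
have hRw : Rv *m w = c *: (H^T *m (T *m w)) - nu *: w.
  by rewrite -hw groverE mulmxBl -scalemxAl -mulmxA opprB addrC subrK.
have hw2 : w = c *: (T^T *m (T *m w)) - nu *: (c *: (H^T *m (T *m w)) - nu *: w).
  rewrite -{1}[w]mul1mx -(revmx_invol R hsym) -mulmxA hRw mulmxBr -!scalemxAr.
  by rewrite (mulmxA Rv) (revmx_Dh_tr R hsym) hRw.
rewrite hTw -!scalemxAr in hw2; rewrite mulmxBl -scalemxAl.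
move: (T^T *m (H *m w)) (H^T *m (H *m w)) hw2 => t h /matrixP hw2.
apply/matrixP => i j; move/(_ i j): hw2; rewrite !mxE => hw2.
have h1 : 1 - nu * nu != 0 by rewrite subr_eq0 eq_sym.
have -> : w i j = (w i j - nu * nu * w i j) / (1 - nu * nu) by field; rewrite ?h1.
by rewrite {1}hw2; field; rewrite ?hnu ?hk ?h1.
Qed.

Section Projection.
Variable E : 'M[C]_#|V|.
Hypotheses (hE : orth_proj_eigenspace A E lamC) (hlamR : conjc lamC = lamC)
  (hconj : conjc nu = nu^-1).

Lemma proj_idem : E *m E = E. Proof. by case: hE. Qed.
Lemma proj_hadj : hadj E = E. Proof. by case: hE. Qed.
Lemma proj_fix (v : 'cV[C]_#|V|) : E *m v = v <-> A *m v = lamC *: v.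
Proof. by case: hE. Qed.

Lemma adjmx_proj : A *m E = lamC *: E.
Proof.
apply: mulmx_colwise => j.
have /proj_fix -> : E *m col j E = col j E by rewrite colE mulmxA proj_idem.
by apply/matrixP => i l; rewrite !mxE.
Qed.

Lemma proj_adjmx : E *m A = lamC *: E.
Proof.
rewrite -{1}proj_hadj -(hadj_adjmx R hsym) -hadjM adjmx_proj hadjZ proj_hadj.
by rewrite hlamR.
Qed.

Lemma proj_Y_X_proj : E *m (Y *m (X *m E)) = d *: E.
Proof.
rewrite (mulmxA Y) Y_mul_X mulmxA mulmxBr mul_mx_scalar -scalemxAr proj_adjmx.
by rewrite mulmxBl -!scalemxAl proj_idem scalerA -scalerBl.
Qed.

(* The candidate projection onto the nu-eigenspace of U. *)
Definition grover_proj := d^-1 *: (X *m E *m Y).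

Lemma grover_proj_X_proj : grover_proj *m (X *m E) = X *m E.
Proof.
rewrite /grover_proj -scalemxAl -!mulmxA proj_Y_X_proj -scalemxAr scalerA.
by rewrite mulVf ?d_neq0 // scale1r.
Qed.

Lemma grover_proj_idem : grover_proj *m grover_proj = grover_proj.
Proof.
by rewrite {2}/grover_proj -scalemxAr mulmxA grover_proj_X_proj.
Qed.

Lemma hadj_X : hadj X = Y.
Proof.
rewrite hadjB hadjZ !hadj_tr hadj_Dh hadj_Dt !trmxK fmorphV.
by rewrite -[_ nu]/(conjc nu) hconj invrK.
Qed.

Lemma hadj_Y : hadj Y = X.
Proof. by rewrite hadjB hadjZ hadj_Dh hadj_Dt hconj. Qed.

Lemma grover_proj_hadj : hadj grover_proj = grover_proj.
Proof.
rewrite /grover_proj hadjZ !hadjM proj_hadj hadj_X hadj_Y mulmxA.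
rewrite fmorphV rmorphB !rmorphM !rmorph_nat rmorphD fmorphV.
by rewrite -[_ nu]/(conjc nu) -[_ lamC]/(conjc lamC) hconj hlamR invrK (addrC nu^-1).
Qed.

Lemma grover_X_proj : U *m (X *m E) = nu *: (X *m E).
Proof.
rewrite mulmxA (mulmxBr U) -scalemxAr grover_Dh_tr grover_Dt_tr.
move: H^T T^T => Ht Tt.
rewrite !mulmxBl -!scalemxAl -(mulmxA Ht) adjmx_proj -scalemxAr.
move: (Ht *m E) (Tt *m E) => a b.
by apply/matrixP => i j; rewrite !mxE hlam; field; rewrite ?hnu ?hk.
Qed.

Lemma grover_proj_fix (w : 'cV[C]_#|{: garc e}|) :
  grover_proj *m w = w <-> U *m w = nu *: w.
Proof.
split=> [<-|hw].
  rewrite /grover_proj -!scalemxAl -scalemxAr !mulmxA -(mulmxA U) grover_X_proj.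
  by rewrite -!scalemxAl !scalerA mulrC.
have /proj_fix hEb := grover_eigvec_head hw.
rewrite (grover_eigvec_rebuild hw) -scalemxAr -{1}hEb (mulmxA X E).
by rewrite (mulmxA grover_proj) grover_proj_X_proj -mulmxA hEb.
Qed.

Lemma grover_projE (F : 'M[C]_#|{: garc e}|) :
  orth_proj_eigenspace U F nu -> F = grover_proj.
Proof.
case=> FF Fadj Ffix; apply: orth_proj_unique => //.
- exact: grover_proj_idem.
- exact: grover_proj_hadj.
- by move=> v; rewrite Ffix grover_proj_fix.
Qed.

End Projection.
End Eigenvalue.

Lemma spectral_params_inv (lamC nu : C) :
  nu != 0 -> nu * nu != 1 -> lamC = k%:R / 2%:R * (nu + nu^-1) ->
  [/\ nu^-1 != 0, nu^-1 * nu^-1 != 1 & lamC = k%:R / 2%:R * (nu^-1 + nu^-1^-1)].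
Proof.
move=> hnu hnu2 ->; rewrite invr_eq0 -invfM invr_eq1 invrK (addrC nu^-1).
by split.
Qed.

Lemma grover_proj_sub (lamC nu : C) (E : 'M[C]_#|V|) (Fp Fm : 'M[C]_#|{: garc e}|) :
  (k%:R : C) != 0 -> nu != 0 -> nu * nu != 1 ->
  lamC = k%:R / 2%:R * (nu + nu^-1) -> conjc lamC = lamC -> conjc nu = nu^-1 ->
  orth_proj_eigenspace A E lamC ->
  orth_proj_eigenspace U Fp nu -> orth_proj_eigenspace U Fm nu^-1 ->
  Fp - Fm = (2%:R / (k%:R * (nu^-1 - nu))) *: (T^T *m E *m H - H^T *m E *m T).
Proof.
move=> hk hnu hnu2 hlam hlamR hconj hE hFp hFm.
have [hnu' hnu2' hlam'] := spectral_params_inv hnu hnu2 hlam.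
have hconj' : conjc nu^-1 = nu^-1^-1 by rewrite fmorphV -[_ nu]/(conjc nu) hconj.
rewrite (grover_projE hk hnu hnu2 hlam hE hlamR hconj hFp).
rewrite (grover_projE hk hnu' hnu2' hlam' hE hlamR hconj' hFm).
rewrite /grover_proj invrK (addrC nu^-1 nu) -scalerBr sandwich_sub scalerA.
have h1 : 1 - nu * nu != 0 by rewrite subr_eq0 eq_sym.
have h2 : nu * nu - 1 != 0 by rewrite subr_eq0.
by congr (_ *: _); rewrite (dE hnu hlam); field; rewrite hnu hk h2 mulNr h1.
Qed.

End GroverSpectrum.

Section UnitCircle.
Variables (R : realType) (a b : R).
Hypothesis hab : a ^+ 2 + b ^+ 2 = 1.
Local Notation z := (a +i* b).

Lemma unit_mulJ : z * conjc z = 1.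
Proof.
by apply/eqP; rewrite eq_complex /=; apply/andP; split; apply/eqP; rewrite -?hab; ring.
Qed.

Lemma unit_inv : z^-1 = a +i* (- b).
Proof. exact: mulr1_eq unit_mulJ. Qed.

Lemma unit_neq0 : z != 0.
Proof. by apply: contra_eq_neq unit_mulJ => ->; rewrite mul0r eq_sym oner_neq0. Qed.

Lemma unit_sqr_neq1 : b != 0 -> z * z != 1.
Proof.
move=> hb; apply: contra hb => /eqP /mulr1_eq; rewrite unit_inv => -[hbb].
by apply/eqP; lra.
Qed.

Lemma unit_lam (k : nat) (lam : R) :
  lam = k%:R * a -> lam%:C = k%:R / 2%:R * (z + z^-1).
Proof.
move=> ->; rewrite (mulr1_eq unit_mulJ) addcJ /= rmorphM rmorph_nat.
by field.
Qed.

Lemma unit_coef (k : nat) : k != 0%N -> b != 0 ->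
  2%:R / (k%:R * (z^-1 - z)) = ((k%:R * b)^-1)%:C * 'i.
Proof.
move=> hk hb.
have iV : 'i^-1 = - 'i :> R[i] by apply: mulr1_eq; rewrite mulrN -expr2 sqr_i opprK.
have hbC : b%:C != 0 :> R[i] by rewrite eq_complex /= negb_and hb.
have hkC : k%:R != 0 :> R[i] by rewrite pnatr_eq0.
rewrite (mulr1_eq unit_mulJ) -opprB subcJ /= rmorphV ?unitfE ?mulf_neq0 ?pnatr_eq0 //.
rewrite rmorphM rmorph_nat mulrN invrN !invfM iV.
by field; rewrite -[_ b]/(b%:C) hbC hkC.
Qed.

End UnitCircle.

Unset Implicit Arguments.

Theorem corollary5p2 (R : realType) (V : finType) (e : rel V) (k : nat)
  (hsimple : simple_graph e) (hconn : connected_graph e) (hreg : regular e k)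
  (lam theta : R)
  (hlam : eigenvalue (adjmx e R) lam%:C)
  (hlamk : lam != k%:R) (hlamnk : lam != - k%:R)
  (htheta : 0 < theta < pi) (hcos : lam = k%:R * cos theta) :
  eigenvalue (grover e R k) (cos theta +i* sin theta) /\
  eigenvalue (grover e R k) (cos theta +i* (- sin theta)) /\
  forall (E : 'M[R[i]]_#|V|) (Fp Fm : 'M[R[i]]_#|{: @garc V e}|),
    orth_proj_eigenspace (adjmx e R) E lam%:C ->
    orth_proj_eigenspace (grover e R k) Fp (cos theta +i* sin theta) ->
    orth_proj_eigenspace (grover e R k) Fm (cos theta +i* (- sin theta)) ->
    exists c : R,
      Fp - Fm = (c%:C * 'i) *:
        ((Dt e R)^T *m E *m Dh e R - (Dh e R)^T *m E *m Dt e R).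
Proof.
case: hsimple => hsym _.
have hcs := cos2Dsin2 theta.
have hsin : sin theta != 0 := lt0r_neq0 (sin_gt0_pi htheta).
have hk0 : k != 0%N by apply: contraNneq hlamk => k0; rewrite hcos k0 mul0r.
have hk : (k%:R : R[i]) != 0 by rewrite pnatr_eq0.
have hnu := unit_neq0 hcs.
have hnu2 := unit_sqr_neq1 hcs hsin.
have hlamC := unit_lam hcs hcos.
have [hnu' hnu2' hlamC'] := spectral_params_inv hnu hnu2 hlamC.
rewrite -(unit_inv hcs).
have ev_nu := grover_eigenvalue hsym hreg hk hnu hnu2 hlamC hlam.
have ev_inv := grover_eigenvalue hsym hreg hk hnu' hnu2' hlamC' hlam.
split=> //; split=> //.
move=> E Fp Fm hE hFp hFm; exists (k%:R * sin theta)^-1.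
rewrite (grover_proj_sub hsym hreg hk hnu hnu2 hlamC _ _ hE hFp hFm) ?unit_coef //.
  exact: conjc_real.
exact: (esym (mulr1_eq (unit_mulJ hcs))).
Qed.
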